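(* Let $L_0$ be the boundary value problem on the tree $G$ (with $m$ edges and boundary conditions BC) with all potentials and all constants equal to zero, i.e. $\sigma_j\equiv 0$ and $\gamma_j=0$ for $j=1,\dots,m$, and let $\Delta_0(\lambda)$ be its characteristic function. Then $$\Delta_0(\lambda)=\rho^{1-d}\,R_m(\sin\rho\pi,\cos\rho\pi),$$ where $d$ is the number of Dirichlet conditions among BC and $R_m$ is a polynomial in two variables of degree $m$. Moreover, $$R_m(\sin\rho\pi,\cos\rho\pi)=\begin{cases}\sin\rho\pi\, Q_{m-1}(\cos\rho\pi), & d \text{ even},\\ Q_m(\cos\rho\pi), & d\text{ odd},\end{cases}$$ where $Q_k$ ($k=m-1$ or $k=m$) is a polynomial of degree $k$ satisfying $Q_k(z)=(-1)^kQ_k(-z)$.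
   Context: Let $G$ be a finite tree with vertex set $V$ and edges $e_1,\dots,e_m$ ($m\ge1$), all of length $\pi$. For $v\in V$ let $E_v$ be the set of edges incident to $v$. Vertices of degree $1$ are boundary vertices (set $\partial G$), the others are internal (set $\mathrm{int}\,G$). Each edge $e_j$ is parametrized by $x_j\in[0,\pi]$, the values $0$ and $\pi$ corresponding to its two endpoints. Let $\sigma_j\in L_2(0,\pi)$ be real-valued and $\gamma_j\in\mathbb R$, $j=1,\dots,m$. Put $y_j^{[1]}=y_j'-\sigma_jy_j$ (quasi-derivative) and $\ell_jy_j=-(y_j^{[1]})'-\sigma_jy_j^{[1]}-\sigma_j^2y_j$ on the domain $\{y_j\in W_2^1[0,\pi]: y_j^{[1]}\in W_1^1[0,\pi],\ \ell_jy_j\in L_2(0,\pi)\}$ (this realizes $-y_j''+q_jy_j$ with $q_j=\sigma_j'\in W_2^{-1}(0,\pi)$). If a vertex $u$ corresponds to $x_j=0$ put $y_j(u)=y_j(0)$, $y_j^{[1]}(u)=-y_j^{[1]}(0)$; if $v$ corresponds to $x_j=\pi$ put $y_j(v)=y_j(\pi)$, $y_j^{[1]}(v)=y_j^{[1]}(\pi)+\gamma_jy_j(\pi)$. The problem $L$: $\ell_jy_j=\lambda y_j$ on $(0,\pi)$, $j=1,\dots,m$, with, at each internal vertex $v$, $y_j(v)=y_k(v)$ for $e_j,e_k\in E_v$ and $\sum_{e_j\in E_v}y_j^{[1]}(v)=0$, and at each boundary vertex either the Dirichlet condition $y(v)=0$ or the Neumann condition $y^{[1]}(v)=0$ (a fixed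 choice, called BC). Let $C_j(x,\lambda),S_j(x,\lambda)$ solve $\ell_jy=\lambda y$ with $C_j(0)=S_j^{[1]}(0)=1$, $C_j^{[1]}(0)=S_j(0)=0$. The characteristic function $\Delta(\lambda)$ is defined recursively: (i) if $m=1$: for $y_1(0)=y_1(\pi)=0$, $\Delta=S_1(\pi,\lambda)$; for $y_1(0)=y_1^{[1]}(\pi)=0$, $\Delta=S_1^{[1]}(\pi,\lambda)+\gamma_1S_1(\pi,\lambda)$; for $y_1^{[1]}(0)=y_1(\pi)=0$, $\Delta=C_1(\pi,\lambda)$; for $y_1^{[1]}(0)=y_1^{[1]}(\pi)=0$, $\Delta=C_1^{[1]}(\pi,\lambda)+\gamma_1C_1(\pi,\lambda)$. (ii) if $m>1$: pick an internal vertex $u$ of degree $s$; splitting $G$ at $u$ gives subtrees $G_1,\dots,G_s$ (each containing one edge of $E_u$, $u$ being a boundary vertex of each); let $\Delta_j^D,\Delta_j^N$ be the characteristic functions of the analogous problems on $G_j$ with the Dirichlet, resp. Neumann, condition at $u$, the same matching conditions at internal vertices and BC at the other boundary vertices; then $\Delta=\sum_{j=1}^s\Delta_j^N\prod_{k\ne j}\Delta_k^D$ (independent of the choice of $u$). Throughout, $\rho=\sqrt\lambda$ with $\mathrm{Re}\,\rho\ge0$. *)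

From mathcomp Require Import all_boot all_order all_algebra.
From mathcomp Require Import all_classical all_reals all_analysis.
From mathcomp Require Import complex.
Set Implicit Arguments.
Unset Strict Implicit.
Unset Printing Implicit Defensive.
Import Order.TTheory GRing.Theory Num.Theory.
Local Open Scope ring_scope.

Definition rcosh {R : realType} (y : R) : R := (expR y + expR (- y)) / 2.
Definition rsinh {R : realType} (y : R) : R := (expR y - expR (- y)) / 2.

Definition rc {R : realType} (x : R) : R[i] := Complex x 0.

(* sin(a+ib) = sin a cosh b + i cos a sinh b,
   cos(a+ib) = cos a cosh b - i sin a sinh b *)
Definition csin {R : realType} (z : R[i]) : R[i] :=
  Complex (sin (complex.Re z) * rcosh (complex.Im z))
          (cos (complex.Re z) * rsinh (complex.Im z)).
Definition ccos {R : realType} (z : R[i]) : R[i] :=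
  Complex (cos (complex.Re z) * rcosh (complex.Im z))
          (- (sin (complex.Re z) * rsinh (complex.Im z))).

Definition cpi {R : realType} : R[i] := rc (pi : R).

Definition cdifferentiable {R : realType} (y : R -> R[i]) : Prop :=
  forall x : R, derivable (fun t => complex.Re (y t)) x 1 /\
                derivable (fun t => complex.Im (y t)) x 1.

Definition cderiv {R : realType} (y : R -> R[i]) : R -> R[i] :=
  fun x => Complex (derive1 (fun t => complex.Re (y t)) x)
                   (derive1 (fun t => complex.Im (y t)) x).

(* y solves  l y = -y'' = lam * y  (zero potential: sigma = 0, so the
   quasi-derivative y^[1] = y' - 0*y is the ordinary derivative y'). *)
Definition solves_zero_pot {R : realType} (lam : R[i]) (y : R -> R[i]) : Prop :=
  [/\ cdifferentiable y, cdifferentiable (cderiv y) &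
      forall x : R, - cderiv (cderiv y) x = lam * y x].

(* Trees.  Vertices are natural numbers; edges are indexed by natural  *)
(* numbers j, with endpoints ep j = (vertex at x_j = 0, vertex at       *)
(* x_j = pi).  A (sub)graph is given by a sequence J of edge indices.   *)
Section Graphs.
Variable ep : nat -> nat * nat.

Definition verts (J : seq nat) : seq nat :=
  undup (flatten [seq [:: (ep j).1; (ep j).2] | j <- J]).

Definition incident (v : nat) (j : nat) : bool :=
  ((ep j).1 == v) || ((ep j).2 == v).

Definition deg (J : seq nat) (v : nat) : nat := count (incident v) J.

Definition adj (J : seq nat) : rel nat :=
  fun a b => has (fun j => (ep j == (a, b)) || (ep j == (b, a))) J.

Definition gconnected (J : seq nat) : Prop :=
  forall u v, u \in verts J -> v \in verts J ->
    exists p : seq nat, path (adj J) u p /\ last u p = v.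

Definition is_tree (J : seq nat) : Prop :=
  [/\ J != [::], uniq J, all (fun j => (ep j).1 != (ep j).2) J,
      gconnected J & size (verts J) = (size J).+1].

Definition boundary (J : seq nat) : seq nat :=
  [seq v <- verts J | deg J v == 1%N].

Definition is_split (J : seq nat) (u : nat) (parts : seq (seq nat)) : Prop :=
  [/\ u \in verts J, (1 < deg J u)%N, size parts = deg J u,
      perm_eq (flatten parts) J &
      forall i, (i < size parts)%N ->
        is_tree (nth [::] parts i) /\ deg (nth [::] parts i) u = 1%N].

(* boundary condition: bc v = true means Dirichlet, false means Neumann *)
Definition setbc (bc : nat -> bool) (u : nat) (b : bool) : nat -> bool :=
  fun v => if v == u then b else bc v.

End Graphs.

(*   Cp j lam = C_j(pi,lam),  C1p j lam = C_j^[1](pi,lam),             *)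
(*   Sp j lam = S_j(pi,lam),  S1p j lam = S_j^[1](pi,lam),  gam j.      *)
(* charfun J bc D  means: D is (a) characteristic function of the       *)
(* problem on the tree J with boundary conditions bc.  Since the paper *)
(* states the result is independent of the splitting vertex, any       *)
(* choice of splitting vertex is allowed.                             *)
Section CharFun.
Variable R : realType.
Variable ep : nat -> nat * nat.
Variables (Cp C1p Sp S1p : nat -> R[i] -> R[i]) (gam : nat -> R).

Definition charfun_edge (j : nat) (bc : nat -> bool) : R[i] -> R[i] :=
  fun lam =>
  match bc (ep j).1, bc (ep j).2 with
  | true, true => Sp j lam
  | true, false => S1p j lam + rc (gam j) * Sp j lam
  | false, true => Cp j lam
  | false, false => C1p j lam + rc (gam j) * Cp j lam
  end.

Inductive charfun : seq nat -> (nat -> bool) -> (R[i] -> R[i]) -> Prop :=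
| charfun_one (j : nat) (bc : nat -> bool) :
    (ep j).1 != (ep j).2 ->
    charfun [:: j] bc (charfun_edge j bc)
| charfun_split (J : seq nat) (bc : nat -> bool) (u : nat)
    (parts : seq (seq nat)) (DD DN : nat -> R[i] -> R[i]) :
    (1 < size J)%N ->
    is_tree ep J ->
    is_split ep J u parts ->
    (forall i, (i < size parts)%N ->
       charfun (nth [::] parts i) (setbc bc u true) (DD i)) ->
    (forall i, (i < size parts)%N ->
       charfun (nth [::] parts i) (setbc bc u false) (DN i)) ->
    charfun J bc (fun lam =>
      \sum_(i < size parts)
        DN i lam * \prod_(k < size parts | k != i) DD k lam).
End CharFun.

(* Bivariate polynomials:  p : {poly {poly C}},  p = sum_i X^i p_i(Y). *)
Definition eval2 {R : ringType} (p : {poly {poly R}}) (x y : R) : R :=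
  (map_poly (fun q : {poly R} => q.[y]) p).[x].

(* total degree (meaningful for p != 0) *)
Definition tdeg {R : ringType} (p : {poly {poly R}}) : nat :=
  \max_(i < size p | nth (0%R : {poly R}) p i != 0) addn i (size (nth (0%R : {poly R}) p i)).-1.

From mathcomp Require Import all_boot all_order all_algebra.
From mathcomp Require Import all_classical all_reals all_analysis.
From mathcomp Require Import complex.
From mathcomp Require Import ring zify.
Import Order.TTheory GRing.Theory Num.Theory.
Local Open Scope ring_scope.
Set Implicit Arguments. Unset Strict Implicit. Unset Printing Implicit Defensive.

(* With zero potential, C(pi) = cos(rho pi), C'(pi) = -rho sin(rho pi), S(pi) = sin(rho pi)/rho
   and S'(pi) = cos(rho pi), so the characteristic function of a single edge has the shape
     rho^(1 - d) * s^[d even] * Q(c),      s = sin(rho pi),  c = cos(rho pi),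
   where Q has degree m - [d even] and the parity of its degree.  The recursion
   Delta = sum_j Delta_j^N prod_(k <> j) Delta_k^D preserves this shape: splitting at u adds
   one Dirichlet condition in every factor Delta_k^D, so the powers of rho multiply to
   rho^(1 - d); even powers of s are rewritten as powers of 1 - c^2; and the degrees add up to
   the number of edges.  No cancellation occurs in the top degree of the sum, because the
   leading coefficient of Q times (-i)^[d even] is always a positive integer times i (-i)^d. *)

Local Notation Re := complex.Re.
Local Notation Im := complex.Im.

Section RealDerivatives.
Variable R : realType.
Implicit Types (f g df : R -> R) (k t x : R).

Lemma is_derive_comp_scale f df k t : (forall x, is_derive x 1 f (df x)) ->
  is_derive t 1 (fun u => f (k * u)) (k * df (k * t)).
Proof.
move=> Hf; rewrite mulrC.
apply: (is_derive1_comp (Hf (k * t))).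
apply: (is_derive_eq (is_deriveZ k (is_derive_id t 1))); exact: mulr1.
Qed.

Lemma is_derive_mul f g (df dg x : R) : is_derive x 1 f df -> is_derive x 1 g dg ->
  is_derive x 1 (fun u => f u * g u) (df * g x + f x * dg).
Proof.
move=> Hf Hg; apply: is_derive_eq (is_deriveM Hf Hg) _.
by rewrite addrC; congr (_ + _); exact: mulrC.
Qed.

Lemma is_derive_expRN x : is_derive x 1 (fun u => expR (- u)) (- expR (- x) : R).
Proof.
have := is_derive1_comp (is_derive_expR (- x)) (is_deriveN (is_derive_id x 1)).
by rewrite mulrN1.
Qed.

Lemma is_derive_rcosh x : is_derive x 1 (@rcosh R) (rsinh x).
Proof.
apply: is_derive_eq (is_derive_mul (is_deriveD (is_derive_expR x) (is_derive_expRN x))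
                                   (is_derive_cst (2^-1 : R) x 1)) _.
by rewrite mulr0 addr0.
Qed.

Lemma is_derive_rsinh x : is_derive x 1 (@rsinh R) (rcosh x).
Proof.
apply: is_derive_eq (is_derive_mul (is_deriveB (is_derive_expR x) (is_derive_expRN x))
                                   (is_derive_cst (2^-1 : R) x 1)) _.
by rewrite mulr0 addr0 opprK.
Qed.

End RealDerivatives.

Section ComplexDerivatives.
Variable R : realType.
Local Notation C := R[i].
Implicit Types (z w : C) (f g df dg : R -> C).

Lemma ReD z w : Re (z + w) = Re z + Re w. Proof. by case: z => ? ?; case: w. Qed.
Lemma ImD z w : Im (z + w) = Im z + Im w. Proof. by case: z => ? ?; case: w. Qed.
Lemma ReN z : Re (- z) = - Re z. Proof. by case: z. Qed.
Lemma ImN z : Im (- z) = - Im z. Proof. by case: z. Qed.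
Lemma ReM z w : Re (z * w) = Re z * Re w - Im z * Im w. Proof. by case: z => ? ?; case: w. Qed.
Lemma ImM z w : Im (z * w) = Re z * Im w + Im z * Re w. Proof. by case: z => ? ?; case: w. Qed.

Lemma complexP z w : Re z = Re w -> Im z = Im w -> z = w.
Proof. by case: z; case: w => ? ? ? ? /= -> ->. Qed.

Definition is_cderive f df := forall t : R,
  is_derive t 1 (fun u => Re (f u)) (Re (df t)) /\
  is_derive t 1 (fun u => Im (f u)) (Im (df t)).

Lemma is_cderive_eq f df dg : is_cderive f df -> df =1 dg -> is_cderive f dg.
Proof. by move=> Hf E t; rewrite -E; apply: Hf. Qed.

Lemma is_cderive_cst (k : C) : is_cderive (fun=> k) (fun=> 0).
Proof. by move=> t; split; apply: is_derive_cst. Qed.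

Lemma is_cderiveD f g df dg : is_cderive f df -> is_cderive g dg ->
  is_cderive (fun t => f t + g t) (fun t => df t + dg t).
Proof.
move=> Hf Hg t; have [fr fi] := Hf t; have [gr gi] := Hg t; split.
  by rewrite (funext (fun u => ReD (f u) (g u))) ReD; apply: is_deriveD.
by rewrite (funext (fun u => ImD (f u) (g u))) ImD; apply: is_deriveD.
Qed.

Lemma is_cderiveN f df : is_cderive f df -> is_cderive (fun t => - f t) (fun t => - df t).
Proof.
move=> Hf t; have [fr fi] := Hf t; split.
  by rewrite (funext (fun u => ReN (f u))) ReN; apply: is_deriveN.
by rewrite (funext (fun u => ImN (f u))) ImN; apply: is_deriveN.
Qed.

Lemma is_cderiveB f g df dg : is_cderive f df -> is_cderive g dg ->
  is_cderive (fun t => f t - g t) (fun t => df t - dg t).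
Proof. by move=> Hf Hg; apply: is_cderiveD Hf (is_cderiveN Hg). Qed.

Lemma is_cderiveM f g df dg : is_cderive f df -> is_cderive g dg ->
  is_cderive (fun t => f t * g t) (fun t => df t * g t + f t * dg t).
Proof.
move=> Hf Hg t; have [fr fi] := Hf t; have [gr gi] := Hg t; split.
  rewrite (funext (fun u => ReM (f u) (g u))).
  apply: is_derive_eq (is_deriveB (is_derive_mul fr gr) (is_derive_mul fi gi)) _.
  by rewrite ReD !ReM; ring.
rewrite (funext (fun u => ImM (f u) (g u))).
apply: is_derive_eq (is_deriveD (is_derive_mul fr gi) (is_derive_mul fi gr)) _.
by rewrite ImD !ImM; ring.
Qed.

Lemma is_cderive0_cst f : is_cderive f (fun=> 0) -> forall x y, f x = f y.
Proof.
move=> Hf x y; apply: complexP.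
  by apply: (is_derive_0_is_cst (f := fun u => Re (f u))) => t; case: (Hf t).
by apply: (is_derive_0_is_cst (f := fun u => Im (f u))) => t; case: (Hf t).
Qed.

End ComplexDerivatives.

Section ComplexTrig.
Variable R : realType.
Local Notation C := R[i].
Implicit Types (z rho : C) (u : R).

Lemma Re_mul_rc z u : Re (z * rc u) = Re z * u.
Proof. by rewrite ReM /= mulr0 subr0. Qed.
Lemma Im_mul_rc z u : Im (z * rc u) = Im z * u.
Proof. by rewrite ImM /= mulr0 add0r. Qed.

Lemma is_cderive_ccos rho :
  is_cderive (fun t => ccos (rho * rc t)) (fun t => - rho * csin (rho * rc t)).
Proof.
move=> t; rewrite /ccos /csin; split => /=.
  under eq_fun => u do rewrite Re_mul_rc Im_mul_rc.
  apply: is_derive_eq (is_derive_mul (is_derive_comp_scale _ t (@is_derive_cos R))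
                                     (is_derive_comp_scale _ t (@is_derive_rcosh R))) _.
  by rewrite ReM ReN /= Re_mul_rc Im_mul_rc; ring.
under eq_fun => u do rewrite Re_mul_rc Im_mul_rc.
apply: is_derive_eq (is_deriveN (is_derive_mul (is_derive_comp_scale _ t (@is_derive_sin R))
                                     (is_derive_comp_scale _ t (@is_derive_rsinh R)))) _.
by rewrite ImM ReN ImN /= Re_mul_rc Im_mul_rc; ring.
Qed.

Lemma is_cderive_csin rho :
  is_cderive (fun t => csin (rho * rc t)) (fun t => rho * ccos (rho * rc t)).
Proof.
move=> t; rewrite /ccos /csin; split => /=.
  under eq_fun => u do rewrite Re_mul_rc Im_mul_rc.
  apply: is_derive_eq (is_derive_mul (is_derive_comp_scale _ t (@is_derive_sin R))
                                     (is_derive_comp_scale _ t (@is_derive_rcosh R))) _.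
  by rewrite ReM /= Re_mul_rc Im_mul_rc; ring.
under eq_fun => u do rewrite Re_mul_rc Im_mul_rc.
apply: is_derive_eq (is_derive_mul (is_derive_comp_scale _ t (@is_derive_cos R))
                                   (is_derive_comp_scale _ t (@is_derive_rsinh R))) _.
by rewrite ImM /= Re_mul_rc Im_mul_rc; ring.
Qed.

Lemma ccos_mul_rc0 rho : ccos (rho * rc 0) = 1.
Proof.
apply: complexP; rewrite /ccos /rcosh /rsinh /= Re_mul_rc Im_mul_rc !mulr0.
  by rewrite cos0 oppr0 expR0 mul1r; field.
by rewrite sin0 mul0r oppr0.
Qed.

Lemma csin_mul_rc0 rho : csin (rho * rc 0) = 0.
Proof.
apply: complexP; rewrite /= Re_mul_rc Im_mul_rc !mulr0 ?sin0 ?mul0r //.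
by rewrite /rsinh oppr0 subrr mul0r mulr0.
Qed.

Lemma rcosh2_sub_rsinh2 u : rcosh u ^+ 2 - rsinh u ^+ 2 = 1.
Proof.
rewrite -[RHS](expR0 R) -(subrr u) expRD /rcosh /rsinh.
by field.
Qed.

Lemma ccos2_add_csin2 z : ccos z ^+ 2 + csin z ^+ 2 = 1.
Proof.
have hyp := rcosh2_sub_rsinh2 (Im z); have trig := cos2Dsin2 (Re z).
apply: complexP; rewrite /ccos /csin !expr2 ?ReD ?ImD ?ReM ?ImM /=; last by ring.
by rewrite -hyp -[X in _ = X - _]mul1r -[X in _ = _ - X]mul1r -trig; ring.
Qed.

End ComplexTrig.

Section ZeroPotentialODE.
Variable R : realType.
Local Notation C := R[i].

Lemma is_cderive_cderiv (y : R -> C) : cdifferentiable y -> is_cderive y (cderiv y).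
Proof.
move=> dy t; have [dre dim] := dy t.
by split; rewrite /cderiv /= derive1E; apply: derivableP.
Qed.

Lemma solves_zero_pot_at_pi (rho : C) (y : R -> C) :
  rho != 0 -> solves_zero_pot (rho ^+ 2) y ->
  y pi = y 0 * ccos (rho * cpi) + cderiv y 0 * csin (rho * cpi) / rho /\
  cderiv y pi = cderiv y 0 * ccos (rho * cpi) - rho * y 0 * csin (rho * cpi).
Proof.
move=> rho0 [dy ddy y_eq].
have Dy := is_cderive_cderiv dy.
have Dy' : is_cderive (cderiv y) (fun t => - rho ^+ 2 * y t).
  by apply: is_cderive_eq (is_cderive_cderiv ddy) _ => t; rewrite mulNr -y_eq opprK.
pose c t := ccos (rho * rc t); pose s t := csin (rho * rc t).
have Dc : is_cderive (fun t => rho * c t) (fun t => rho * (- rho * s t)).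
  apply: is_cderive_eq (is_cderiveM (is_cderive_cst rho) (is_cderive_ccos rho)) _.
  by move=> t; rewrite mul0r add0r.
have Ds : is_cderive (fun t => rho * s t) (fun t => rho * (rho * c t)).
  apply: is_cderive_eq (is_cderiveM (is_cderive_cst rho) (is_cderive_csin rho)) _.
  by move=> t; rewrite mul0r add0r.
(* the two first integrals of -y'' = rho^2 y *)
have A : is_cderive (fun t => y t * (rho * c t) - cderiv y t * s t) (fun=> 0).
  apply: is_cderive_eq
    (is_cderiveB (is_cderiveM Dy Dc) (is_cderiveM Dy' (is_cderive_csin rho))) _.
  by move=> t /=; rewrite /c /s; ring.
have B : is_cderive (fun t => y t * (rho * s t) + cderiv y t * c t) (fun=> 0).
  apply: is_cderive_eq
    (is_cderiveD (is_cderiveM Dy Ds) (is_cderiveM Dy' (is_cderive_ccos rho))) _.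
  by move=> t /=; rewrite /c /s; ring.
move: (is_cderive0_cst A pi 0) (is_cderive0_cst B pi 0) (ccos2_add_csin2 (rho * cpi)).
rewrite /c /s /= ccos_mul_rc0 csin_mul_rc0 -/(@cpi R).
set cp := ccos _; set sp := csin _ => {}A {}B CS; split.
  apply: (mulfI rho0); rewrite -[rho * y pi]mulr1 -CS.
  transitivity (cp * (y pi * (rho * cp) - cderiv y pi * sp) +
                sp * (y pi * (rho * sp) + cderiv y pi * cp)); first by ring.
  by rewrite A B; field.
rewrite -[cderiv y pi]mulr1 -CS.
transitivity (cp * (y pi * (rho * sp) + cderiv y pi * cp) -
              sp * (y pi * (rho * cp) - cderiv y pi * sp)); first by ring.
by rewrite A B; ring.
Qed.
End ZeroPotentialODE.

Section Boundary.
Local Open Scope nat_scope.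
Variable ep : nat -> nat * nat.

Lemma mem_verts (J : seq nat) v : (v \in verts ep J) = has (incident ep v) J.
Proof.
rewrite /verts mem_undup; elim: J => [//|j J IH] /=.
by rewrite !inE -IH /incident !(eq_sym v) orbA.
Qed.

Lemma deg_gt0 (J : seq nat) v : (0 < deg ep J v) = (v \in verts ep J).
Proof. by rewrite mem_verts -has_count. Qed.

Lemma boundary_uniq (J : seq nat) : uniq (boundary ep J).
Proof. exact/filter_uniq/undup_uniq. Qed.

Lemma boundary_edge j : (ep j).1 != (ep j).2 ->
  boundary ep [:: j] = [:: (ep j).1; (ep j).2].
Proof.
move=> ne; rewrite /boundary /verts /= !inE (negbTE ne) /=.
by rewrite /deg /= /incident !eqxx /= orbT.
Qed.

Lemma count_setbc_boundary bc u (J : seq nat) b : u \in boundary ep J ->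
  count (setbc bc u b) (boundary ep J) = b + count (setbc bc u false) (boundary ep J).
Proof.
move=> uJ; rewrite !(permP (perm_to_rem uJ)) /= /setbc eqxx addnA addn0.
congr (_ + _); apply: eq_in_count => v.
by rewrite mem_rem_uniq ?boundary_uniq // => /andP[/negbTE ->].
Qed.

End Boundary.

Section TreeSplit.
Local Open Scope nat_scope.
Variable ep : nat -> nat * nat.
Variables (J : seq nat) (u : nat) (parts : seq (seq nat)).
Hypotheses (treeJ : is_tree ep J) (splitJ : is_split ep J u parts).

Local Notation V := [seq rem u (verts ep p) | p <- parts].

Lemma split_part p : p \in parts -> is_tree ep p /\ deg ep p u = 1.
Proof. by case: splitJ => _ _ _ _ Hp /(nthP [::]) [i ip <-]; apply: Hp. Qed.

Lemma split_part_boundary p : p \in parts -> u \in boundary ep p.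
Proof. by move/split_part=> [_ deg_u]; rewrite mem_filter deg_u eqxx -deg_gt0 deg_u. Qed.

Lemma size_split : size J = \sum_(p <- parts) size p.
Proof.
case: splitJ => _ _ _ permJ _.
by rewrite -(perm_size permJ) size_flatten /shape sumnE big_map.
Qed.

Lemma deg_split v : deg ep J v = \sum_(p <- parts) deg ep p v.
Proof.
case: splitJ => _ _ _ permJ _.
by rewrite /deg -(permP permJ) count_flatten sumnE big_map.
Qed.

Lemma verts_split_sub : {subset verts ep J <= u :: flatten V}.
Proof.
case: splitJ => _ _ _ permJ _ v; rewrite mem_verts inE => /hasP[j jJ vj].
case: eqP => //= /eqP vu; apply/flatten_mapP.
have /flattenP[p pP jp] : j \in flatten parts by rewrite (perm_mem permJ).
exists p => //; rewrite mem_rem_uniq ?undup_uniq // inE vu mem_verts.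
by apply/hasP; exists j.
Qed.

(* #|verts J| = #|J| + 1 = 1 + \sum_p (#|verts p| - 1): the parts share no vertex but [u]. *)
Lemma split_verts_uniq : uniq (u :: flatten V).
Proof.
case: treeJ => _ _ _ _ szJ.
apply: leq_size_uniq (undup_uniq _ : uniq (verts ep J)) verts_split_sub _.
rewrite /= size_flatten /shape -map_comp sumnE big_map szJ size_split ltnS.
rewrite big_seq [X in _ <= X]big_seq; apply: leq_sum => p pP /=.
have [[_ _ _ _ szp] dpu] := split_part pP.
by rewrite size_rem -?deg_gt0 ?dpu // szp.
Qed.

Lemma deg_split_part p v : p \in parts -> v != u -> v \in verts ep p ->
  deg ep J v = deg ep p v.
Proof.
move=> pP vu vp.
have memV q : (v \in rem u (verts ep q)) = (0 < deg ep q v).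
  by rewrite mem_rem_uniq ?undup_uniq // inE vu deg_gt0.
have deg0 qs : v \notin flatten [seq rem u (verts ep q) | q <- qs] ->
    \sum_(q <- qs) deg ep q v = 0.
  move=> nv; rewrite big_seq big1 // => q qs_q; apply/eqP.
  rewrite -leqn0 leqNgt -memV; apply: contra nv => vq.
  by apply/flatten_mapP; exists q.
move: split_verts_uniq (deg_split v); case/splitPr: pP => ps1 ps2.
rewrite map_cat flatten_cat /= big_cat big_cons /= => /andP[_].
rewrite cat_uniq => /and3P[_ /hasPn nV1].
rewrite cat_uniq => /and3P[_ /hasPn nV2 _] ->.
have vV : v \in rem u (verts ep p) by rewrite memV deg_gt0.
rewrite !deg0 ?add0n ?addn0 //; last by apply: nV1; rewrite mem_cat vV.
by apply/negP => /nV2; rewrite vV.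
Qed.

Lemma split_verts_perm : perm_eq (verts ep J) (u :: flatten V).
Proof.
apply: uniq_perm (undup_uniq _) split_verts_uniq _ => v.
apply/idP/idP; first exact: verts_split_sub.
case: splitJ => uJ _ _ permJ _; rewrite inE => /predU1P[-> //|].
case/flatten_mapP=> p pP; rewrite mem_rem_uniq ?undup_uniq // => /andP[_].
rewrite !mem_verts => /hasP[j jp vj]; apply/hasP; exists j => //.
by rewrite -(perm_mem permJ); apply/flattenP; exists p.
Qed.

Lemma count_boundary_split bc :
  count bc (boundary ep J) = \sum_(p <- parts) count (setbc bc u false) (boundary ep p).
Proof.
case: splitJ => _ deg_u _ _ _.
rewrite count_filter (permP split_verts_perm) /= -[deg ep J u == 1]negbK.
rewrite neq_ltn deg_u orbT andbF add0n count_flatten sumnE !big_map.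
apply: eq_big_seq => p pP; rewrite count_filter rem_filter ?undup_uniq // count_filter.
apply: eq_in_count => v vp /=; rewrite /setbc.
have [->|vu] := eqVneq v u; first by rewrite andbF.
by rewrite andbT (deg_split_part pP vu vp).
Qed.

End TreeSplit.

Lemma size_lead_coefD_eqsize (K : nzRingType) (p q : {poly K}) :
  size p = size q -> lead_coef p + lead_coef q != 0 ->
  size (p + q) = size p /\ lead_coef (p + q) = lead_coef p + lead_coef q.
Proof.
move=> pq lead_neq0.
have coef_top : (p + q)`_(size p).-1 = lead_coef p + lead_coef q.
  by rewrite coefD !lead_coefE pq.
have size_pq : size (p + q) = size p.
  apply/eqP; rewrite eqn_leq (leq_trans (size_polyD _ _)) ?pq ?maxnn //= leqNgt.
  apply/negP => lt; move: lead_neq0; rewrite -coef_top nth_default ?eqxx //.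
  by rewrite pq -ltnS (ltn_predK lt).
by rewrite lead_coefE size_pq coef_top.
Qed.

Section TrigForm.
Variable R : realType.
Local Notation C := R[i].
Local Open Scope complex_scope.

Definition csinpi (rho : C) := csin (rho * cpi).
Definition ccospi (rho : C) := ccos (rho * cpi).

Definition phase (d : nat) : C := 'i * (- 'i) ^+ d.

Lemma mulr_i_Ni : 'i * - 'i = 1 :> C.
Proof. by apply/eqP; rewrite eq_complex /= oppr0 !mul0r !mul1r !add0r opprK !eqxx. Qed.

Lemma i_neq0 : 'i != 0 :> C.
Proof. by apply/eqP => /(congr1 (@complex.Im R)) /= /eqP; rewrite oner_eq0. Qed.

Lemma phase_neq0 d : phase d != 0.
Proof. by rewrite mulf_neq0 ?expf_neq0 ?oppr_eq0 ?i_neq0. Qed.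

Lemma phase_multiple_neq0 (a x : C) (k d : nat) :
  (0 < k)%N -> a * x = k%:R * phase d -> a != 0.
Proof.
move=> k_gt0 ax; apply: contra_neq (phase_neq0 d) => a0.
by apply: (mulfI (_ : k%:R != 0)); rewrite ?pnatr_eq0 -?lt0n // -ax a0 !mul0r mulr0.
Qed.

Lemma phase_mulS d1 d2 : phase d1 * phase d2.+1 = phase (d1 + d2).
Proof.
transitivity (phase (d1 + d2) * ('i * - 'i)); last by rewrite mulr_i_Ni mulr1.
by rewrite /phase exprS exprD; ring.
Qed.

(* With [o := ~~ odd d], [s := csinpi rho] and [c := ccospi rho], the number
   [lead_coef Q * (-i)^o] is the top-degree part of [s^o Q(c)] at [(s, c) = (-i, 1)];
   as [phase d] depends on [d] only, such terms cannot cancel in a sum. *)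
Definition trig_form (d m : nat) (D : C -> C) : Prop :=
  exists (Q : {poly C}) (k : nat),
  [/\ (0 < k)%N, lead_coef Q * (- 'i) ^+ (~~ odd d) = k%:R * phase d,
      (size Q + ~~ odd d = m.+1)%N,
      forall z, Q.[z] = (-1) ^+ (size Q).-1 * Q.[- z] &
      forall rho, rho != 0 ->
        D (rho ^+ 2) = rho ^ (1 - d%:Z) * (csinpi rho ^+ (~~ odd d) * Q.[ccospi rho])].

Lemma eq_trig_form d m D1 D2 : D1 =1 D2 -> trig_form d m D1 -> trig_form d m D2.
Proof.
by move=> eqD [Q [k [k0 lead sz par val]]]; exists Q, k; split=> // rho /val; rewrite eqD.
Qed.

Lemma trig_form_add d m D1 D2 : trig_form d m D1 -> trig_form d m D2 ->
  trig_form d m (fun lam => D1 lam + D2 lam).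
Proof.
move=> [Q1 [k1 [k1_gt0 lead1 sz1 par1 val1]]] [Q2 [k2 [k2_gt0 lead2 sz2 par2 val2]]].
have sz12 : size Q2 = size Q1 by apply/eqP; rewrite -(eqn_add2r (~~ odd d)) sz1 sz2.
have lead12 : (lead_coef Q1 + lead_coef Q2) * (- 'i) ^+ (~~ odd d) = (k1 + k2)%:R * phase d.
  by rewrite mulrDl lead1 lead2 natrD mulrDl.
have [sz12' lead12'] := size_lead_coefD_eqsize (esym sz12)
  (phase_multiple_neq0 (ltn_addr k2 k1_gt0) lead12).
exists (Q1 + Q2), (k1 + k2)%N; split; rewrite ?sz12' ?lead12' ?addn_gt0 ?k1_gt0 //.
  by move=> z; rewrite !hornerD par1 par2 sz12 mulrDr.
by move=> rho rho0; rewrite val1 // val2 // hornerD !mulrDr.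
Qed.

Lemma trig_form_sum (I : Type) (r : seq I) d m (D : I -> C -> C) :
  (0 < size r)%N -> (forall i, trig_form d m (D i)) ->
  trig_form d m (fun lam => \sum_(i <- r) D i lam).
Proof.
case: r => [//|i0 r] _ HD; elim: r i0 => [|i1 r IH] i0.
  by apply: eq_trig_form (HD i0) => lam; rewrite big_seq1.
by apply: eq_trig_form (trig_form_add (HD i0) (IH i1)) => lam; rewrite [RHS]big_cons.
Qed.

Local Notation W := (1 - 'X^2 : {poly C}).

Lemma size_W : size W = 3%N.
Proof. by rewrite -opprB size_polyN -polyC1 size_XnsubC. Qed.

Lemma lead_coef_W : lead_coef W = -1.
Proof. by rewrite -opprB lead_coefN -polyC1 lead_coefXnsubC. Qed.

Lemma horner_W z : W.[z] = 1 - z ^+ 2.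
Proof. by rewrite !hornerE. Qed.

Lemma sqr_Ni : (- 'i) ^+ 2 = -1 :> C.
Proof.
by rewrite sqrrN expr2; apply/eqP; rewrite eq_complex /= !mul0r !mulr1 !add0r mulr0 oppr0 !eqxx.
Qed.

Lemma csinpi2 rho : csinpi rho ^+ 2 = 1 - ccospi rho ^+ 2.
Proof. by rewrite -(ccos2_add_csin2 (rho * cpi)) addrC addKr. Qed.

Lemma odd_addS_split d1 d2 :
  (~~ odd d1 + odd d2 = ~~ odd (d1 + d2) + 2 * (~~ odd d1 && odd d2))%N.
Proof. by rewrite oddD; case: (odd d1); case: (odd d2). Qed.

Lemma trig_form_mul d1 d2 m1 m2 D1 D2 :
  trig_form d1 m1 D1 -> trig_form d2.+1 m2 D2 ->
  trig_form (d1 + d2) (m1 + m2) (fun lam => D1 lam * D2 lam).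
Proof.
move=> [Q1 [k1 [k1_gt0 lead1 sz1 par1 val1]]] [Q2 [k2 [k2_gt0 lead2 sz2 par2 val2]]].
rewrite /= negbK in lead2 sz2 val2.
set o1 := ~~ odd d1 in lead1 sz1 val1; set o2 := odd d2 in lead2 sz2 val2.
set o := ~~ odd (d1 + d2); set h := o1 && o2.
have o12 : (o1 + o2 = o + 2 * h)%N by apply: odd_addS_split.
have Q1_neq0 : Q1 != 0 by rewrite -lead_coef_eq0 (phase_multiple_neq0 k1_gt0 lead1).
have Q2_neq0 : Q2 != 0 by rewrite -lead_coef_eq0 (phase_multiple_neq0 k2_gt0 lead2).
have Wh_neq0 : W ^+ h != 0 by rewrite expf_neq0 // -size_poly_gt0 size_W.
pose Q := W ^+ h * (Q1 * Q2).
have Q_gt0 : (0 < size Q)%N by rewrite size_poly_gt0 !mulf_neq0.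
have degQ : (size Q).-1 = ((size Q1).-1 + (size Q2).-1 + 2 * h)%N.
  rewrite size_mul ?mulf_neq0 // (size_mul Q1_neq0 Q2_neq0).
  rewrite -(prednK (_ : 0 < size (W ^+ h))%N) ?size_poly_gt0 // size_exp size_W.
  move: Q1_neq0 Q2_neq0; rewrite -!size_poly_gt0.
  set s1 := size Q1; set s2 := size Q2; clearbody s1 s2 h; lia.
exists Q, (k1 * k2)%N; split.
- by rewrite muln_gt0 k1_gt0.
- rewrite !lead_coefM lead_coef_exp lead_coef_W natrM -phase_mulS [RHS]mulrACA -lead1 -lead2.
  by rewrite mulrACA -exprD o12 exprD exprM sqr_Ni /o; ring.
- rewrite -(prednK Q_gt0) degQ -/o.
  move: sz1 sz2 o12 Q1_neq0 Q2_neq0; rewrite -!size_poly_gt0.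
  set s1 := size Q1; set s2 := size Q2; clearbody o1 o2 o h s1 s2; lia.
- move=> z; rewrite degQ !hornerM !horner_exp !horner_W sqrrN par1 par2.
  by rewrite exprD exprM sqrrN !expr1n mulr1 exprD; ring.
move=> rho rho0; rewrite val1 // val2 // !hornerM horner_exp horner_W -csinpi2.
have -> : 1 - (d1 + d2)%:Z = (1 - d1%:Z) + (1 - d2.+1%:Z) by lia.
have sE : csinpi rho ^+ o1 * csinpi rho ^+ o2 =
           csinpi rho ^+ o * (csinpi rho ^+ 2) ^+ h.
  by rewrite -exprD o12 exprD exprM.
rewrite [in RHS]expfzDr // -/o.
transitivity (rho ^ (1 - d1%:Z) * rho ^ (1 - d2.+1%:Z) *
  ((csinpi rho ^+ o1 * csinpi rho ^+ o2) * (Q1.[ccospi rho] * Q2.[ccospi rho]))); first by ring.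
by rewrite sE; ring.
Qed.

Lemma trig_form_prod (I : Type) (r : seq I) (P : pred I) d0 m0 D0
    (d m : I -> nat) (D : I -> C -> C) :
  trig_form d0 m0 D0 -> (forall i, P i -> trig_form (d i).+1 (m i) (D i)) ->
  trig_form (d0 + \sum_(i <- r | P i) d i) (m0 + \sum_(i <- r | P i) m i)
            (fun lam => D0 lam * \prod_(i <- r | P i) D i lam).
Proof.
elim: r d0 m0 D0 => [|i r IH] d0 m0 D0 H0 HD.
  by rewrite !big_nil !addn0; apply: eq_trig_form H0 => lam; rewrite big_nil mulr1.
rewrite !big_cons; case: ifP => Pi.
  rewrite !addnA; apply: eq_trig_form (IH _ _ _ (trig_form_mul H0 (HD i Pi)) HD) => lam.
  by rewrite big_cons Pi mulrA.
by apply: eq_trig_form (IH _ _ _ H0 HD) => lam; rewrite big_cons Pi.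
Qed.

End TrigForm.

Section ZeroPotentialCharFun.
Variable R : realType.
Local Notation C := R[i].
Variable ep : nat -> nat * nat.
Variables C0 S0 : R -> C -> C.
Hypothesis fundamental_CS : forall lam : C,
  [/\ solves_zero_pot lam (fun x => C0 x lam), C0 0 lam = 1 &
      cderiv (fun x => C0 x lam) 0 = 0] /\
  [/\ solves_zero_pot lam (fun x => S0 x lam), S0 0 lam = 0 &
      cderiv (fun x => S0 x lam) 0 = 1].

Local Notation C0pi := (fun (_ : nat) lam => C0 pi lam).
Local Notation dC0pi := (fun (_ : nat) lam => cderiv (fun x => C0 x lam) pi).
Local Notation S0pi := (fun (_ : nat) lam => S0 pi lam).
Local Notation dS0pi := (fun (_ : nat) lam => cderiv (fun x => S0 x lam) pi).
Local Notation charfun0 := (charfun ep C0pi dC0pi S0pi dS0pi (fun=> 0)).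

Lemma fundamental_CS_at_pi (rho : C) : rho != 0 ->
  [/\ C0 pi (rho ^+ 2) = ccospi rho,
      cderiv (fun x => C0 x (rho ^+ 2)) pi = - rho * csinpi rho,
      S0 pi (rho ^+ 2) = csinpi rho / rho &
      cderiv (fun x => S0 x (rho ^+ 2)) pi = ccospi rho].
Proof.
move=> rho0; have [[solC C0_0 C0'_0] [solS S0_0 S0'_0]] := fundamental_CS (rho ^+ 2).
have [-> ->] := solves_zero_pot_at_pi rho0 solC.
have [-> ->] := solves_zero_pot_at_pi rho0 solS.
by rewrite C0_0 C0'_0 S0_0 S0'_0 /ccospi /csinpi; split; ring.
Qed.

Lemma trig_form_edge j bc : (ep j).1 != (ep j).2 ->
  trig_form (count bc (boundary ep [:: j])) 1
    (charfun_edge ep C0pi dC0pi S0pi dS0pi (fun=> 0) j bc).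
Proof.
move=> ne; rewrite boundary_edge // /charfun_edge /=.
case: (bc (ep j).1); case: (bc (ep j).2) => /=.
- exists 1, 1%N; split=> //.
  + by rewrite lead_coef1 /phase sqr_Ni mulrN1 mul1r.
  + by rewrite size_poly1.
  + by move=> z; rewrite !hornerC size_poly1 mul1r.
  move=> rho rho0; have [_ _ -> _] := fundamental_CS_at_pi rho0.
  by rewrite hornerC mulr1 mulrC (_ : rho ^ _ = rho^-1).
- exists 'X, 1%N; split=> //.
  + by rewrite lead_coefX /phase mulr_i_Ni mul1r.
  + by rewrite size_polyX.
  + by move=> z; rewrite !hornerX size_polyX mulN1r opprK.
  move=> rho rho0; have [_ _ _ ->] := fundamental_CS_at_pi rho0.
  by rewrite (_ : rc 0 = 0) // mul0r addr0 hornerX (_ : rho ^ _ = 1) // !mul1r.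
- exists 'X, 1%N; split=> //.
  + by rewrite lead_coefX /phase mulr_i_Ni mul1r.
  + by rewrite size_polyX.
  + by move=> z; rewrite !hornerX size_polyX mulN1r opprK.
  move=> rho rho0; have [-> _ _ _] := fundamental_CS_at_pi rho0.
  by rewrite hornerX (_ : rho ^ _ = 1) // !mul1r.
exists (-1), 1%N; split=> //.
- by rewrite /= lead_coefN lead_coef1 /phase expr1 expr0 mulN1r opprK mulr1 mul1r.
- by rewrite size_polyN size_poly1.
- by move=> z; rewrite !hornerN !hornerC size_polyN size_poly1 mul1r.
move=> rho rho0; have [_ -> _ _] := fundamental_CS_at_pi rho0.
by rewrite (_ : rc 0 = 0) // mul0r addr0 hornerN hornerC (_ : rho ^ _ = rho) //; ring.
Qed.

Lemma trig_form_split J bc u parts (DD DN : nat -> C -> C) :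
  is_tree ep J -> is_split ep J u parts ->
  (forall i, (i < size parts)%N ->
     trig_form (count (setbc bc u true) (boundary ep (nth [::] parts i)))
               (size (nth [::] parts i)) (DD i)) ->
  (forall i, (i < size parts)%N ->
     trig_form (count (setbc bc u false) (boundary ep (nth [::] parts i)))
               (size (nth [::] parts i)) (DN i)) ->
  trig_form (count bc (boundary ep J)) (size J)
    (fun lam => \sum_(i < size parts) DN i lam * \prod_(k < size parts | k != i) DD k lam).
Proof.
move=> treeJ splitJ HD HN; set n := size parts.
pose p (i : 'I_n) := nth [::] parts i.
pose dN (i : 'I_n) := count (setbc bc u false) (boundary ep (p i)).
have HD' (i : 'I_n) : trig_form (dN i).+1 (size (p i)) (DD i).
  have uB := split_part_boundary splitJ (mem_nth [::] (ltn_ord i)).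
  by have := HD i (ltn_ord i); rewrite (count_setbc_boundary bc true uB).
have dJ : count bc (boundary ep J) = (\sum_(i < n) dN i)%N.
  by rewrite (count_boundary_split treeJ splitJ) (big_nth [::]) big_mkord.
have mJ : size J = (\sum_(i < n) size (p i))%N.
  by rewrite (size_split splitJ) (big_nth [::]) big_mkord.
apply: trig_form_sum => [|i].
  case: splitJ => _ deg_u n_eq _ _.
  by rewrite /index_enum -enumT size_enum_ord /n n_eq ltnW.
rewrite dJ mJ (bigD1 i) //= [X in trig_form _ X](bigD1 i) //=.
exact: trig_form_prod (HN i (ltn_ord i)) (fun k _ => HD' k).
Qed.

Lemma trig_form_charfun J bc D :
  charfun0 J bc D -> trig_form (count bc (boundary ep J)) (size J) D.
Proof.
elim=> [j bc' ne | J' bc' u parts DD DN _ treeJ splitJ _ HD _ HN].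
  exact: trig_form_edge ne.
exact: trig_form_split treeJ splitJ HD HN.
Qed.

End ZeroPotentialCharFun.

Section Bivariate.
Variable K : comNzRingType.
Implicit Types (Q : {poly K}) (x y : K).

Lemma eval2_polyC Q x y : eval2 Q%:P x y = Q.[y].
Proof.
rewrite /eval2 /map_poly horner_poly size_polyC.
have [->|_] := eqVneq Q 0; first by rewrite big_ord0 horner0.
by rewrite big_ord1 /= coefC /= expr0 mulr1.
Qed.

Lemma eval2_polyC_mulX Q x y : Q != 0 -> eval2 (Q%:P * 'X) x y = x * Q.[y].
Proof.
move=> Q0; rewrite /eval2 /map_poly horner_poly size_mulX ?polyC_eq0 // size_polyC Q0.
rewrite !big_ord_recl big_ord0 /= !coefMX /= coefC /= horner0 mul0r add0r.
by rewrite expr1 addr0 mulrC.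
Qed.

Lemma tdeg_polyC Q : Q != 0 -> tdeg Q%:P = (size Q).-1.
Proof.
move=> Q0; rewrite /tdeg size_polyC Q0 big_mkcond big_ord1 /= coefC /= Q0.
by rewrite add0n.
Qed.

Lemma tdeg_polyC_mulX Q : Q != 0 -> tdeg (Q%:P * 'X) = (size Q).-1.+1.
Proof.
move=> Q0; rewrite /tdeg size_mulX ?polyC_eq0 // size_polyC Q0 big_mkcond.
rewrite !big_ord_recl big_ord0 /= !coefMX /= coefC /= Q0 eqxx /=.
by rewrite maxn0 max0n add1n.
Qed.

End Bivariate.

Theorem lemma1 (R : realType) (m : nat) (ep : nat -> nat * nat)
  (bc : nat -> bool) (C0 S0 : R -> R[i] -> R[i]) (Delta0 : R[i] -> R[i]) :
  (0 < m)%N ->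
  is_tree ep (iota 0 m) ->
  (* C0(x,lam), S0(x,lam): solutions of -y'' = lam y (zero potential) with
     C0(0)=1, C0'(0)=0, S0(0)=0, S0'(0)=1 *)
  (forall lam : R[i],
     [/\ solves_zero_pot lam (fun x => C0 x lam), C0 0 lam = 1 &
         cderiv (fun x => C0 x lam) 0 = 0] /\
     [/\ solves_zero_pot lam (fun x => S0 x lam), S0 0 lam = 0 &
         cderiv (fun x => S0 x lam) 0 = 1]) ->
  (* Delta0 is the characteristic function of L_0 (all sigma_j = 0, gamma_j = 0) *)
  charfun ep
    (fun _ lam => C0 pi lam) (fun _ lam => cderiv (fun x => C0 x lam) pi)
    (fun _ lam => S0 pi lam) (fun _ lam => cderiv (fun x => S0 x lam) pi)
    (fun _ => 0) (iota 0 m) bc Delta0 ->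
  let d := count bc (boundary ep (iota 0 m)) in
  exists Rm : {poly {poly R[i]}},
    [/\ Rm != 0, tdeg Rm = m,
        (forall lam rho : R[i], lam != 0 -> rho ^+ 2 = lam -> 0 <= complex.Re rho ->
           Delta0 lam = rho ^ (1 - (d%:Z)) * eval2 Rm (csin (rho * cpi)) (ccos (rho * cpi)))
      & (exists Q : {poly R[i]},
          if odd d then
            [/\ size Q = m.+1,
                (forall z, Q.[z] = (-1) ^+ m * Q.[- z]) &
                (forall rho : R[i], 0 <= complex.Re rho ->
                   eval2 Rm (csin (rho * cpi)) (ccos (rho * cpi)) = Q.[ccos (rho * cpi)])]
          else
            [/\ size Q = m,
                (forall z, Q.[z] = (-1) ^+ (m.-1) * Q.[- z]) &
                (forall rho : R[i], 0 <= complex.Re rho ->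
                   eval2 Rm (csin (rho * cpi)) (ccos (rho * cpi))
                   = csin (rho * cpi) * Q.[ccos (rho * cpi)])])].
Proof.
move=> m_gt0 _ CS charD d.
have [Q [k [_ _ szQ parQ valQ]]] := trig_form_charfun CS charD.
rewrite size_iota -/d in szQ valQ.
have Q_neq0 : Q != 0.
  by rewrite -size_poly_gt0; move: szQ m_gt0; case: (~~ odd d) => /=; lia.
have valD lam rho : lam != 0 -> rho ^+ 2 = lam ->
    Delta0 lam = rho ^ (1 - d%:Z) * (csinpi rho ^+ (~~ odd d) * Q.[ccospi rho]).
  move=> lam0 rho_lam; rewrite -rho_lam; apply: valQ.
  by apply: contraNneq lam0 => rho0; rewrite -rho_lam rho0 expr0n.
case: (odd d) in szQ valD *; rewrite /= ?addn0 ?addn1 in szQ valD.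
- exists Q%:P; split; rewrite ?polyC_eq0 ?tdeg_polyC ?szQ //.
  + by move=> lam rho lam0 rho_lam _; rewrite (valD _ _ lam0 rho_lam) eval2_polyC mul1r.
  exists Q; split=> // [z|rho _]; first by rewrite parQ szQ.
  exact: eval2_polyC.
exists (Q%:P * 'X); split; rewrite ?mulf_neq0 ?polyC_eq0 ?polyX_eq0 ?tdeg_polyC_mulX //.
- by case: szQ => ->; rewrite prednK.
- by move=> lam rho lam0 rho_lam _; rewrite (valD _ _ lam0 rho_lam) eval2_polyC_mulX // expr1.
exists Q; split=> // [|z|rho _]; first by move: szQ; case.
  by rewrite parQ; move: szQ; case=> ->.
exact: eval2_polyC_mulX.
Qed.
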